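(* Let $h:[0,\infty)\to[0,\infty)$ be concave and non-decreasing, let $u>l\ge0$, and let $(a_k)_{k=1}^n$, $(b_k)_{k=1}^n$ be sequences of non-negative reals with $a_k\le b_k$ for each $k$. Then $$h(a_1+h(a_2+\dots h(a_n+u)))-h(a_1+h(a_2+\dots h(a_n+l)))\ \ge\ h(b_1+h(b_2+\dots h(b_n+u)))-h(b_1+h(b_2+\dots h(b_n+l))).$$
   Context: Throughout the paper all numbers are taken to be non-negative reals. *)

From Stdlib Require Import Reals List.
Open Scope R_scope.

Fixpoint nest (h : R -> R) (a : list R) (x : R) : R :=
  match a with
  | nil => x
  | a1 :: rest => h (a1 + nest h rest x)
  end.

Definition concave_on_nonneg (h : R -> R) : Prop :=
  forall x y t, 0 <= x -> 0 <= y -> 0 <= t <= 1 ->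
    t * h x + (1 - t) * h y <= h (t * x + (1 - t) * y).

Definition nondecreasing_on_nonneg (h : R -> R) : Prop :=
  forall x y, 0 <= x -> x <= y -> h x <= h y.

From Stdlib Require Import Reals List Lra.
Open Scope R_scope.

(* Concavity makes the increments h (x + d) - h x non-increasing in x.  Peeling
   off the outermost h, the gap for b is an increment of h over a base point
   b1 + nest h b' l at least as large as the base point a1 + nest h a' l of the
   gap for a, and by induction over a step no longer than the inner gap for a;
   monotonicity of h absorbs the difference in step lengths. *)

Section Nest.

Variable h : R -> R.
Hypothesis h_nonneg : forall x, 0 <= x -> 0 <= h x.
Hypothesis h_concave : concave_on_nonneg h.
Hypothesis h_nondecreasing : nondecreasing_on_nonneg h.

(* Both q and p + r - q are convex combinations of p and r, with swapped weights. *)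
Lemma concave_outer_le_inner p q r :
  0 <= p -> p <= q -> q <= r -> h p + h r <= h q + h (p + r - q).
Proof.
  intros Hp Hpq Hqr.
  destruct (Req_dec p r) as [Epr | Npr].
  { subst r. replace q with p by lra. replace (p + p - p) with p by ring. lra. }
  set (t := (r - q) / (r - p)).
  assert (Hinv : 0 < / (r - p)) by (apply Rinv_0_lt_compat; lra).
  assert (Hunit : (r - p) * / (r - p) = 1) by (field; lra).
  assert (Ht : 0 <= t <= 1) by (unfold t, Rdiv; split; nra).
  assert (Hq := h_concave p r t Hp ltac:(lra) Ht).
  assert (Hs := h_concave p r (1 - t) Hp ltac:(lra) ltac:(lra)).
  replace (t * p + (1 - t) * r) with q in Hq by (unfold t; field; lra).
  replace ((1 - t) * p + (1 - (1 - t)) * r) with (p + r - q) in Hs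
    by (unfold t; field; lra).
  lra.
Qed.

Lemma concave_increment_antitone x y d :
  0 <= x -> x <= y -> 0 <= d -> h (y + d) - h y <= h (x + d) - h x.
Proof.
  intros Hx Hxy Hd.
  assert (H := concave_outer_le_inner x y (y + d) Hx Hxy ltac:(lra)).
  replace (x + (y + d) - y) with (x + d) in H by ring.
  lra.
Qed.

Lemma increment_le x y al bl au bu :
  0 <= x -> x <= y -> 0 <= al -> al <= bl -> bl <= bu ->
  bu - bl <= au - al ->
  h (y + bu) - h (y + bl) <= h (x + au) - h (x + al).
Proof.
  intros Hx Hxy Hal Halbl Hblbu Hgap.
  assert (Hd := concave_increment_antitone (x + al) (y + bl) (bu - bl)
                  ltac:(lra) ltac:(lra) ltac:(lra)).
  replace (y + bl + (bu - bl)) with (y + bu) in Hd by ring.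
  assert (Hm : h (x + al + (bu - bl)) <= h (x + au)) by (apply h_nondecreasing; lra).
  lra.
Qed.

Lemma nest_nonneg a x :
  Forall (fun c => 0 <= c) a -> 0 <= x -> 0 <= nest h a x.
Proof.
  intros Ha Hx; induction Ha as [| c a Hc Ha IH]; simpl; [assumption |].
  apply h_nonneg; lra.
Qed.

Lemma nest_le_compat_r a x y :
  Forall (fun c => 0 <= c) a -> 0 <= x -> x <= y -> nest h a x <= nest h a y.
Proof.
  intros Ha Hx Hxy; induction Ha as [| c a Hc Ha IH]; simpl; [assumption |].
  apply h_nondecreasing; [| lra].
  pose proof (nest_nonneg a x Ha Hx); lra.
Qed.

Lemma nest_le_compat_l a b x :
  Forall (fun c => 0 <= c) a -> Forall2 Rle a b -> 0 <= x ->
  nest h a x <= nest h b x.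
Proof.
  intros Ha Hab Hx; revert Ha.
  induction Hab as [| c d a b Hcd Hab IH]; intros Ha; simpl; [lra |].
  inversion Ha as [| ? ? Hc Ha']; subst.
  apply h_nondecreasing.
  - pose proof (nest_nonneg a x Ha' Hx); lra.
  - specialize (IH Ha'); lra.
Qed.

Lemma nest_gap_le a b l u :
  Forall (fun c => 0 <= c) a -> Forall (fun c => 0 <= c) b ->
  Forall2 Rle a b -> 0 <= l -> l <= u ->
  nest h b u - nest h b l <= nest h a u - nest h a l.
Proof.
  intros Ha Hb Hab Hl Hlu; revert Ha Hb.
  induction Hab as [| c d a b Hcd Hab IH]; intros Ha Hb; simpl; [lra |].
  inversion Ha as [| ? ? Hc Ha']; inversion Hb as [| ? ? Hd Hb']; subst.
  apply increment_le; auto.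
  - apply nest_nonneg; assumption.
  - apply nest_le_compat_l; assumption.
  - apply nest_le_compat_r; assumption.
Qed.

End Nest.

Theorem lemma3 (h : R -> R) (a b : list R) (u l : R) :
  (forall x, 0 <= x -> 0 <= h x) ->
  concave_on_nonneg h ->
  nondecreasing_on_nonneg h ->
  0 <= l -> l < u ->
  length a = length b ->
  Forall (fun x => 0 <= x) a ->
  Forall (fun x => 0 <= x) b ->
  Forall2 (fun x y => x <= y) a b ->
  nest h a u - nest h a l >= nest h b u - nest h b l.
Proof.
  intros Hnonneg Hconcave Hmono Hl Hlu _ Ha Hb Hab.
  apply Rle_ge, nest_gap_le; auto; lra.
Qed.
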